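(* Let $\pi:P\to M$ be a principal fibre bundle with group $G=P^{-1}P$, in the setting described in the context. For a connection $\nabla$ in the groupoid $PP^{-1}$, define its connection form $\omega$ by $\omega(u,v):=u^{-1}\big(\nabla(\pi(u),\pi(v))\cdot v\big)\in G$ for neighbours $u\sim v$ in $P$; equivalently $u\cdot\omega(u,v)=\nabla(\pi(u),\pi(v))\cdot v$. Then the assignment $\nabla\mapsto\omega$ is a bijection between the set of connections $\nabla$ in $PP^{-1}$ and the set of $G$-valued 1-forms $\omega$ on $P$ satisfying the two conditions (i) $\omega(xg,y)=g^{-1}\omega(x,y)$ whenever $x\sim y$ in $P$ and $g\in G$ is such that also $xg\sim y$; (ii) $\omega(xg,yg)=g^{-1}\omega(x,y)g$ for all $x\sim y$ in $P$ and all $g\in G$.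
   Context: Setting (all calculations may be done as in sets, the paper works internally in a left exact category). Let $\Phi$ be a groupoid whose object set contains a set $M$ and an object $*\notin M$. Let $P$ be the set of arrows of $\Phi$ with domain $*$ and codomain in $M$, and $\pi:P\to M$ the codomain map. The group $G=P^{-1}P:=\Phi( *,* )$ acts on $P$ from the right by precomposition ($x\cdot g=xg$); this action is free and transitive on each fibre $\pi^{-1}(a)$. For $x,z$ in the same fibre, $x^{-1}z\in G$ is the composite in $\Phi$. $PP^{-1}$ denotes the full subgroupoid of $\Phi$ on the objects $M$; its arrows $a\to b$ are the composites $yx^{-1}$ with $\pi(x)=a,\pi(y)=b$, and it acts on $P$ from the left by postcomposition. Composition is written right to left. Both $M$ and $P$ carry a reflexive symmetric ''neighbour'' relation $\sim$; $\pi$ preserves $\sim$; an infinitesimal $k$-simplex is a $(k+1)$-tuple of mutual neighbours; for every infinitesimal $k$-simplex $(a_0,\dots,a_k)$ in $M$ and every $x_0\in\pi^{-1}(a_0)$ there is an infinitesimal $k$-simplex $(x_0,\dots,x_k)$ in $P$ with $\pi(x_i)=a_i$; and the right action of each $g\in G$ preserves $\sim$ on $P$. A connection in $PP^{-1}$ is a map assigning to each pair $a\sim b$ in $M$ an arrow $\nabla(a,b)$ of $PP^{-1}$ from $b$ to $a$, with $\nabla(a,a)=\mathrm{id}_a$ and $\nabla(b,a)=\nabla(a,b)^{-1}$ (a morphism of reflexive symmetric graphs from the neighbour relation on $M$ to $PP^{-1}$). A $G$-valued 1-form on $P$ is a map $\omega$ assigning to each pair $x\sim y$ in $P$ an element $\omega(x,y)\in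 G$, with $\omega(x,x)=e$ and $\omega(y,x)=\omega(x,y)^{-1}$. *)

(* Groupoids are presented "as in sets": a set of objects,
   a set of arrows, domain/codomain maps, identities, a (total, but only
   meaningful on composable pairs) composition and inverses.
   Composition is written right to left: comp g f = g o f, defined when
   dom g = cod f. *)
From Stdlib Require Import Arith.

Record groupoid := Groupoid {
  Ob : Type;
  Ar : Type;
  dom : Ar -> Ob;
  cod : Ar -> Ob;
  idn : Ob -> Ar;
  comp : Ar -> Ar -> Ar;
  inv : Ar -> Ar;
  dom_idn : forall a, dom (idn a) = a;
  cod_idn : forall a, cod (idn a) = a;
  dom_comp : forall g f, dom g = cod f -> dom (comp g f) = dom f;
  cod_comp : forall g f, dom g = cod f -> cod (comp g f) = cod g;
  comp_assoc : forall h g f, dom h = cod g -> dom g = cod f ->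
      comp h (comp g f) = comp (comp h g) f;
  comp_idn_l : forall f, comp (idn (cod f)) f = f;
  comp_idn_r : forall f, comp f (idn (dom f)) = f;
  dom_inv : forall f, dom (inv f) = cod f;
  cod_inv : forall f, cod (inv f) = dom f;
  comp_inv_l : forall f, comp (inv f) f = idn (dom f);
  comp_inv_r : forall f, comp f (inv f) = idn (cod f)
}.

Arguments dom {_}. Arguments cod {_}. Arguments idn {_}.
Arguments comp {_}. Arguments inv {_}.

Section Bundle.
Variable Phi : groupoid.
Variable M : Ob Phi -> Prop.
Variable star : Ob Phi.

(* P = arrows star -> a with a in M; pi = cod *)
Definition inP (x : Ar Phi) : Prop := dom x = star /\ M (cod x).
Definition inG (g : Ar Phi) : Prop := dom g = star /\ cod g = star.

Variable nbM : Ob Phi -> Ob Phi -> Prop.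
Variable nbP : Ar Phi -> Ar Phi -> Prop.

(* a connection in PP^{-1}: for a ~ b in M, an arrow b -> a of the full
   subgroupoid on M, reflexive-symmetric-graph morphism *)
Definition is_connection (nabla : Ob Phi -> Ob Phi -> Ar Phi) : Prop :=
  (forall a b, M a -> M b -> nbM a b ->
     dom (nabla a b) = b /\ cod (nabla a b) = a) /\
  (forall a, M a -> nabla a a = idn a) /\
  (forall a b, M a -> M b -> nbM a b -> nabla b a = inv (nabla a b)).

Definition is_G_one_form (omega : Ar Phi -> Ar Phi -> Ar Phi) : Prop :=
  (forall x y, inP x -> inP y -> nbP x y -> inG (omega x y)) /\
  (forall x, inP x -> omega x x = idn star) /\
  (forall x y, inP x -> inP y -> nbP x y -> omega y x = inv (omega x y)).

Definition cond_i (omega : Ar Phi -> Ar Phi -> Ar Phi) : Prop :=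
  forall x y g, inP x -> inP y -> inG g -> nbP x y -> nbP (comp x g) y ->
    omega (comp x g) y = comp (inv g) (omega x y).

Definition cond_ii (omega : Ar Phi -> Ar Phi -> Ar Phi) : Prop :=
  forall x y g, inP x -> inP y -> inG g -> nbP x y ->
    omega (comp x g) (comp y g) = comp (comp (inv g) (omega x y)) g.

Definition conn_form (nabla : Ob Phi -> Ob Phi -> Ar Phi)
  (u v : Ar Phi) : Ar Phi :=
  comp (inv u) (comp (nabla (cod u) (cod v)) v).

Definition bundle_setting : Prop :=
  ~ M star /\
  (forall a, M a -> exists x, inP x /\ cod x = a) /\
  (forall a, M a -> nbM a a) /\
  (forall a b, M a -> M b -> nbM a b -> nbM b a) /\
  (forall x, inP x -> nbP x x) /\
  (forall x y, inP x -> inP y -> nbP x y -> nbP y x) /\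
  (forall x y, inP x -> inP y -> nbP x y -> nbM (cod x) (cod y)) /\
  (* lifting of infinitesimal k-simplices *)
  (forall (k : nat) (a : nat -> Ob Phi) (x0 : Ar Phi),
     (forall i, i <= k -> M (a i)) ->
     (forall i j, i <= k -> j <= k -> nbM (a i) (a j)) ->
     inP x0 -> cod x0 = a 0 ->
     exists x : nat -> Ar Phi,
       x 0 = x0 /\
       (forall i, i <= k -> inP (x i) /\ cod (x i) = a i) /\
       (forall i j, i <= k -> j <= k -> nbP (x i) (x j))) /\
  (forall x y g, inP x -> inP y -> inG g -> nbP x y ->
     nbP (comp x g) (comp y g)).

End Bundle.

(* A connection [nabla] and its form [omega] determine each other through
   [nabla (pi x) (pi y) = x * omega x y * y^-1] for neighbours [x ~ y] in P.
   Read from left to right this recovers [nabla] from its form, giving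
   injectivity.  Read from right to left it defines a connection from any
   1-form [omega], provided the right-hand side does not depend on the chosen
   lift [x ~ y] of [pi x ~ pi y]: two lifts differ by right translations
   [x g ~ y h], and (i), (ii) give [omega (x g) (y h) = g^-1 * omega x y * h]. *)

From Stdlib Require Import ClassicalEpsilon.

Ltac dom_cod := repeat (first [ rewrite dom_idn | rewrite cod_idn | rewrite dom_inv
  | rewrite cod_inv | rewrite dom_comp by dom_cod | rewrite cod_comp by dom_cod ]);
  try congruence.

Section GroupoidAlgebra.
Variable Phi : groupoid.
Implicit Types f g h : Ar Phi.

Lemma comp_idn_l_at f a : cod f = a -> comp (idn a) f = f.
Proof. intros <-; apply comp_idn_l. Qed.

Lemma comp_idn_r_at f a : dom f = a -> comp f (idn a) = f.
Proof. intros <-; apply comp_idn_r. Qed.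

Lemma compK f h : cod h = dom f -> comp (inv f) (comp f h) = h.
Proof.
  intros Hh. rewrite comp_assoc, comp_inv_l by dom_cod. apply comp_idn_l_at; auto.
Qed.

Lemma compKV f h : cod h = cod f -> comp f (comp (inv f) h) = h.
Proof.
  intros Hh. rewrite comp_assoc, comp_inv_r by dom_cod. apply comp_idn_l_at; auto.
Qed.

Lemma inv_unique h f : dom h = cod f -> comp h f = idn (dom f) -> h = inv f.
Proof.
  intros Hdom Hinv.
  rewrite <- (comp_idn_r_at h (cod f)), <- (comp_inv_r _ f), comp_assoc, Hinv by dom_cod.
  apply comp_idn_l_at. dom_cod.
Qed.

Lemma invK f : inv (inv f) = f.
Proof. symmetry; apply inv_unique; dom_cod. apply comp_inv_r. Qed.

Lemma inv_comp g f : dom g = cod f -> inv (comp g f) = comp (inv f) (inv g).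
Proof.
  intros Hgf. symmetry; apply inv_unique; dom_cod.
  rewrite <- comp_assoc, compK, comp_inv_l by dom_cod. dom_cod.
Qed.

End GroupoidAlgebra.

Ltac groupoid_simpl := repeat (first [ rewrite <- comp_assoc by dom_cod
  | rewrite compK by dom_cod | rewrite compKV by dom_cod | rewrite inv_comp by dom_cod
  | rewrite invK | rewrite comp_inv_l | rewrite comp_inv_r
  | rewrite comp_idn_l_at by dom_cod | rewrite comp_idn_r_at by dom_cod ]).

Section ConnectionForms.
Variables (Phi : groupoid) (M : Ob Phi -> Prop) (star : Ob Phi).
Variables (nbM : Ob Phi -> Ob Phi -> Prop) (nbP : Ar Phi -> Ar Phi -> Prop).

Local Notation P := (inP Phi M star).
Local Notation G := (inG Phi star).

Lemma inP_comp x g : P x -> G g -> P (comp x g).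
Proof. intros [dx Mx] [dg cg]. split; dom_cod. Qed.

Lemma inG_fibre_quotient x x' : P x -> P x' -> cod x = cod x' -> G (comp (inv x) x').
Proof. intros [dx _] [dx' _] cxx'. split; dom_cod. Qed.

Definition form_transport (omega : Ar Phi -> Ar Phi -> Ar Phi) (x y : Ar Phi) :=
  comp x (comp (omega x y) (inv y)).

Definition is_lift (a b : Ob Phi) (p : Ar Phi * Ar Phi) : Prop :=
  P (fst p) /\ P (snd p) /\ cod (fst p) = a /\ cod (snd p) = b /\ nbP (fst p) (snd p).

Lemma bundle_setting_lift : bundle_setting Phi M star nbM nbP ->
  forall a b, M a -> M b -> nbM a b -> exists p, is_lift a b p.
Proof.
  intros [_ [pi_surj [nbM_refl [nbM_sym [_ [_ [_ [lift _]]]]]]]] a b Ma Mb nab.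
  destruct (pi_surj a Ma) as [x [Px cx]].
  destruct (lift 1 (fun i => match i with 0 => a | _ => b end) x)
    as [X [_ [HX HXnb]]]; auto.
  - intros [|i] _; auto.
  - intros [|i] [|j] _ _; auto.
  - destruct (HX 0), (HX 1); auto.
    exists (X 0, X 1). repeat (split; [assumption |]). apply HXnb; repeat constructor.
Qed.

Hypothesis nbP_refl : forall x, P x -> nbP x x.
Hypothesis nbP_sym : forall x y, P x -> P y -> nbP x y -> nbP y x.
Hypothesis nbP_act : forall x y g, P x -> P y -> G g -> nbP x y ->
  nbP (comp x g) (comp y g).
Hypothesis nb_cod : forall x y, P x -> P y -> nbP x y -> nbM (cod x) (cod y).
Hypothesis pi_surj : forall a, M a -> exists x, P x /\ cod x = a.
Hypothesis lift_edge : forall a b, M a -> M b -> nbM a b -> exists p, is_lift a b p.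

Section OneForms.
Variable omega : Ar Phi -> Ar Phi -> Ar Phi.
Hypothesis omega_form : is_G_one_form Phi M star nbP omega.

Lemma form_transport_dom_cod x y : P x -> P y -> nbP x y ->
  dom (form_transport omega x y) = cod y /\ cod (form_transport omega x y) = cod x.
Proof.
  intros Px Py nxy. destruct omega_form as [omegaG _].
  destruct (omegaG x y Px Py nxy), Px, Py. split; unfold form_transport; dom_cod.
Qed.

Lemma form_transport_refl x : P x -> form_transport omega x x = idn (cod x).
Proof.
  intros Px. destruct omega_form as [_ [omega_refl _]].
  unfold form_transport. rewrite omega_refl by auto. destruct Px. groupoid_simpl.
  congruence.
Qed.

Lemma form_transport_sym x y : P x -> P y -> nbP x y ->
  form_transport omega y x = inv (form_transport omega x y).
Proof.
  intros Px Py nxy. destruct omega_form as [omegaG [_ omega_sym]].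
  unfold form_transport. rewrite omega_sym by auto.
  destruct (omegaG x y Px Py nxy), Px, Py. groupoid_simpl. reflexivity.
Qed.

Hypothesis omega_i : cond_i Phi M star nbP omega.
Hypothesis omega_ii : cond_ii Phi M star nbP omega.

Lemma cond_i_second x y g : P x -> P y -> G g -> nbP x y -> nbP x (comp y g) ->
  omega x (comp y g) = comp (omega x y) g.
Proof.
  intros Px Py Gg nxy nxyg. destruct omega_form as [omegaG [_ omega_sym]].
  pose proof (inP_comp y g Py Gg) as Pyg.
  rewrite <- (invK _ (omega x (comp y g))), <- omega_sym, omega_i, omega_sym by auto.
  destruct (omegaG x y Px Py nxy), Gg, Px, Py. groupoid_simpl. reflexivity.
Qed.

Lemma omega_translate x y g h : P x -> P y -> G g -> G h -> nbP x y ->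
  nbP (comp x g) (comp y h) ->
  omega (comp x g) (comp y h) = comp (comp (inv g) (omega x y)) h.
Proof.
  intros Px Py Gg Gh nxy nxgyh.
  pose proof (inP_comp x g Px Gg) as Pxg. pose proof (inP_comp y g Py Gg) as Pyg.
  pose proof Gg as [dg cg]. pose proof Gh as [dh ch].
  pose proof Px as [dx _]. pose proof Py as [dy _].
  destruct omega_form as [omegaG _]. destruct (omegaG x y Px Py nxy).
  assert (Gginvh : G (comp (inv g) h)) by (split; dom_cod).
  assert (Eyh : comp y h = comp (comp y g) (comp (inv g) h))
    by (groupoid_simpl; reflexivity).
  rewrite Eyh in nxgyh |- *.
  rewrite cond_i_second, omega_ii by auto. groupoid_simpl. reflexivity.
Qed.

Lemma form_transport_translate x y g h : P x -> P y -> G g -> G h -> nbP x y ->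
  nbP (comp x g) (comp y h) ->
  form_transport omega (comp x g) (comp y h) = form_transport omega x y.
Proof.
  intros Px Py Gg Gh nxy nxgyh.
  pose proof Gg as [dg cg]. pose proof Gh as [dh ch].
  pose proof Px as [dx _]. pose proof Py as [dy _].
  destruct omega_form as [omegaG _]. destruct (omegaG x y Px Py nxy).
  unfold form_transport. rewrite omega_translate by auto.
  groupoid_simpl. reflexivity.
Qed.

Lemma form_transport_lift_invariant x y x' y' : P x -> P y -> P x' -> P y' ->
  cod x = cod x' -> cod y = cod y' -> nbP x y -> nbP x' y' ->
  form_transport omega x' y' = form_transport omega x y.
Proof.
  intros Px Py Px' Py' cx cy nxy nx'y'.
  pose proof Px as [dx _]. pose proof Py as [dy _].
  pose proof Px' as [dx' _]. pose proof Py' as [dy' _].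
  assert (Ex' : x' = comp x (comp (inv x) x')) by (groupoid_simpl; reflexivity).
  assert (Ey' : y' = comp y (comp (inv y) y')) by (groupoid_simpl; reflexivity).
  rewrite Ex', Ey' in nx'y' |- *.
  apply form_transport_translate; auto using inG_fibre_quotient.
Qed.

End OneForms.

Section Connections.
Variable nabla : Ob Phi -> Ob Phi -> Ar Phi.
Hypothesis nabla_conn : is_connection Phi M nbM nabla.

Lemma connection_dom_cod x y : P x -> P y -> nbP x y ->
  dom (nabla (cod x) (cod y)) = cod y /\ cod (nabla (cod x) (cod y)) = cod x.
Proof.
  intros Px Py nxy. destruct nabla_conn as [nabla_dom_cod _].
  pose proof Px as [_ Mx]. pose proof Py as [_ My]. auto.
Qed.

Lemma conn_form_one_form : is_G_one_form Phi M star nbP (conn_form Phi nabla).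
Proof.
  destruct nabla_conn as [_ [nabla_refl nabla_sym]].
  split; [| split]; unfold conn_form.
  - intros x y Px Py nxy. destruct (connection_dom_cod x y Px Py nxy), Px, Py.
    split; dom_cod.
  - intros x [dx Mx]. rewrite nabla_refl by auto. groupoid_simpl. congruence.
  - intros x y Px Py nxy. destruct (connection_dom_cod x y Px Py nxy).
    pose proof Px as [dx Mx]. pose proof Py as [dy My].
    rewrite nabla_sym by auto. groupoid_simpl. reflexivity.
Qed.

Lemma conn_form_cond_i : cond_i Phi M star nbP (conn_form Phi nabla).
Proof.
  intros x y g Px Py [dg cg] nxy _. destruct (connection_dom_cod x y Px Py nxy), Px, Py.
  unfold conn_form. rewrite (cod_comp _ x g) by dom_cod. groupoid_simpl. reflexivity.
Qed.

Lemma conn_form_cond_ii : cond_ii Phi M star nbP (conn_form Phi nabla).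
Proof.
  intros x y g Px Py [dg cg] nxy. destruct (connection_dom_cod x y Px Py nxy), Px, Py.
  unfold conn_form. rewrite (cod_comp _ x g), (cod_comp _ y g) by dom_cod.
  groupoid_simpl. reflexivity.
Qed.

Lemma form_transport_conn_form x y : P x -> P y -> nbP x y ->
  form_transport (conn_form Phi nabla) x y = nabla (cod x) (cod y).
Proof.
  intros Px Py nxy. destruct (connection_dom_cod x y Px Py nxy), Px, Py.
  unfold form_transport, conn_form. groupoid_simpl. reflexivity.
Qed.

End Connections.

Lemma conn_form_inj nabla1 nabla2 :
  is_connection Phi M nbM nabla1 -> is_connection Phi M nbM nabla2 ->
  (forall u v, P u -> P v -> nbP u v ->
     conn_form Phi nabla1 u v = conn_form Phi nabla2 u v) ->
  forall a b, M a -> M b -> nbM a b -> nabla1 a b = nabla2 a b.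
Proof.
  intros conn1 conn2 same_form a b Ma Mb nab.
  destruct (lift_edge a b Ma Mb nab) as [[x y] [Px [Py [<- [<- nxy]]]]].
  rewrite <- (form_transport_conn_form nabla1), <- (form_transport_conn_form nabla2)
    by auto.
  unfold form_transport. rewrite same_form by auto. reflexivity.
Qed.

(* [epsilon] picks some lift; when [a ~ b] has none the value is junk. *)
Definition form_connection (omega : Ar Phi -> Ar Phi -> Ar Phi) (a b : Ob Phi) :=
  let p := epsilon (inhabits (idn star, idn star)) (is_lift a b) in
  form_transport omega (fst p) (snd p).

Section FormConnection.
Variable omega : Ar Phi -> Ar Phi -> Ar Phi.
Hypothesis omega_form : is_G_one_form Phi M star nbP omega.
Hypothesis omega_i : cond_i Phi M star nbP omega.
Hypothesis omega_ii : cond_ii Phi M star nbP omega.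

Lemma form_connection_lift x y : P x -> P y -> nbP x y ->
  form_connection omega (cod x) (cod y) = form_transport omega x y.
Proof.
  intros Px Py nxy. unfold form_connection.
  destruct (epsilon_spec (inhabits (idn star, idn star)) (is_lift (cod x) (cod y)))
    as [Px' [Py' [cx [cy nx'y']]]].
  { exists (x, y). exact (conj Px (conj Py (conj eq_refl (conj eq_refl nxy)))). }
  apply (form_transport_lift_invariant omega); auto.
Qed.

Lemma form_connection_is_connection : is_connection Phi M nbM (form_connection omega).
Proof.
  split; [| split].
  - intros a b Ma Mb nab.
    destruct (lift_edge a b Ma Mb nab) as [[x y] [Px [Py [<- [<- nxy]]]]].
    rewrite form_connection_lift by auto. apply form_transport_dom_cod; auto.
  - intros a Ma. destruct (pi_surj a Ma) as [x [Px <-]].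
    rewrite form_connection_lift by auto. apply form_transport_refl; auto.
  - intros a b Ma Mb nab.
    destruct (lift_edge a b Ma Mb nab) as [[x y] [Px [Py [<- [<- nxy]]]]].
    rewrite !form_connection_lift by auto. apply form_transport_sym; auto.
Qed.

Lemma conn_form_form_connection u v : P u -> P v -> nbP u v ->
  conn_form Phi (form_connection omega) u v = omega u v.
Proof.
  intros Pu Pv nuv. destruct omega_form as [omegaG _].
  unfold conn_form. rewrite form_connection_lift by auto.
  destruct (omegaG u v Pu Pv nuv), Pu, Pv.
  unfold form_transport. groupoid_simpl. reflexivity.
Qed.

End FormConnection.

End ConnectionForms.

Theorem proposition1 (Phi : groupoid) (M : Ob Phi -> Prop) (star : Ob Phi)
  (nbM : Ob Phi -> Ob Phi -> Prop) (nbP : Ar Phi -> Ar Phi -> Prop) :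
  bundle_setting Phi M star nbM nbP ->
  (* the assignment nabla |-> omega lands in the 1-forms satisfying (i),(ii) *)
  (forall nabla, is_connection Phi M nbM nabla ->
     is_G_one_form Phi M star nbP (conn_form Phi nabla) /\
     cond_i Phi M star nbP (conn_form Phi nabla) /\
     cond_ii Phi M star nbP (conn_form Phi nabla)) /\
  (* it is injective *)
  (forall nabla1 nabla2,
     is_connection Phi M nbM nabla1 -> is_connection Phi M nbM nabla2 ->
     (forall u v, inP Phi M star u -> inP Phi M star v -> nbP u v ->
        conn_form Phi nabla1 u v = conn_form Phi nabla2 u v) ->
     forall a b, M a -> M b -> nbM a b -> nabla1 a b = nabla2 a b) /\
  (* it is surjective *)
  (forall omega,
     is_G_one_form Phi M star nbP omega ->
     cond_i Phi M star nbP omega -> cond_ii Phi M star nbP omega ->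
     exists nabla, is_connection Phi M nbM nabla /\
       forall u v, inP Phi M star u -> inP Phi M star v -> nbP u v ->
         conn_form Phi nabla u v = omega u v).
Proof.
  intros setting.
  pose proof (bundle_setting_lift Phi M star nbM nbP setting) as lift_edge.
  destruct setting as [_ [pi_surj [_ [_ [nbP_refl [nbP_sym [nb_cod [_ nbP_act]]]]]]]].
  split; [| split].
  - intros nabla conn. split; [| split].
    + apply (conn_form_one_form Phi M star nbM nbP); auto.
    + apply (conn_form_cond_i Phi M star nbM nbP); auto.
    + apply (conn_form_cond_ii Phi M star nbM nbP); auto.
  - apply (conn_form_inj Phi M star nbM nbP); auto.
  - intros omega omega_form omega_i omega_ii.
    exists (form_connection Phi M star nbP omega). split.
    + apply (form_connection_is_connection Phi M star nbM nbP); auto.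
    + apply conn_form_form_connection; auto.
Qed.
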